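(* Let $K$ be a field, $X$ a finite connected poset, and $\varphi$ a Lie automorphism of $I(X,K)$. There exist a bijection $\theta:B\to B$ with $\theta(B_i)\subseteq B_i$ for all $i\ge1$ and a map $\sigma:X^2_<\to K^*$ such that $\widetilde\varphi(e_{xy})=\sigma(x,y)\theta(e_{xy})$ for every $e_{xy}\in B$.
   Context: $I(X,K)$ is the incidence algebra: functions $f:X\times X\to K$ with $f(x,y)=0$ unless $x\le y$, product $(fg)(x,y)=\sum_{x\le t\le y}f(x,t)g(t,y)$; $e_{xy}$ ($x\le y$) is the basis element equal to $1$ at $(x,y)$ and $0$ elsewhere. A Lie automorphism is a bijective linear map preserving $[f,g]=fg-gf$. $B=\{e_{xy}:x<y\}$, $X^2_<=\{(x,y):x<y\}$. Let $l(\lfloor x,y\rfloor)$ be the maximum length of a chain in $\{z:x\le z\le y\}$; $B_i=\{e_{xy}\in B: l(\lfloor x,y\rfloor)\ge i\}$; $L_i=\mathrm{span}_K\{e_{xy}: l(\lfloor x,y\rfloor)=i\}$ ($i\ge0$). $\widetilde\varphi$ is the linear map sending $e_{xy}\in L_i$ to the $L_i$-component of $\varphi(e_{xy})$ in $I(X,K)=\bigoplus_iL_i$. Connected means any two elements are joined by a sequence in which consecutive elements are in a covering relation. *)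

From HB Require Import structures.
From mathcomp Require Import all_boot all_order all_algebra.
Set Implicit Arguments. Unset Strict Implicit. Unset Printing Implicit Defensive.
Import Order.TTheory GRing.Theory.
Local Open Scope order_scope.

Section Incidence.
Variables (d : Order.disp_t) (X : finPOrderType d) (K : fieldType).

(* Elements of I(X,K) are functions X -> X -> K vanishing outside x <= y. *)
Definition inI (f : X -> X -> K) : Prop := forall x y, ~~ (x <= y) -> f x y = 0%R.

Definition imul (f g : X -> X -> K) : X -> X -> K :=
  fun x y => (\sum_(t : X | ((x <= t) && (t <= y))%O) f x t * g t y)%R.

Definition ibracket (f g : X -> X -> K) : X -> X -> K :=
  fun x y => (imul f g x y - imul g f x y)%R.

Definition e (x y : X) : X -> X -> K :=
  fun u v => if (u == x) && (v == y) then 1%R else 0%R.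

Definition lie_automorphism (phi : (X -> X -> K) -> (X -> X -> K)) : Prop :=
  [/\ (forall f, inI f -> inI (phi f)),
      (forall (c : K) f g, inI f -> inI g ->
         forall u v, phi (fun a b => c * f a b + g a b)%R u v
                     = (c * phi f u v + phi g u v)%R),
      (forall f g, inI f -> inI g -> (forall u v, phi f u v = phi g u v) ->
         forall u v, f u v = g u v),
      (forall g, inI g -> exists2 f, inI f & forall u v, phi f u v = g u v)
    & (forall f g, inI f -> inI g ->
         forall u v, phi (ibracket f g) u v = ibracket (phi f) (phi g) u v)].

Definition is_chain (C : {set X}) : bool :=
  [forall a in C, forall b in C, (a <= b) || (b <= a)].

Definition ilen (x y : X) : nat :=
  (\max_(C : {set X} | (C \subset [set z | ((x <= z) && (z <= y))%O]) && is_chain C)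
     #|C|.-1)%N.

Definition Lcomp (i : nat) (f : X -> X -> K) : X -> X -> K :=
  fun u v => if ilen u v == i then f u v else 0%R.

(* tilde phi on a basis element e_xy (x <= y), with e_xy in L_{l(x,y)} *)
Definition phi_tilde (phi : (X -> X -> K) -> (X -> X -> K)) (x y : X)
  : X -> X -> K := Lcomp (ilen x y) (phi (e x y)).

Definition covers (a b : X) : bool := (a < b) && [forall c, ~~ ((a < c) && (c < b))].

Definition connected_poset : Prop :=
  forall x y : X, exists s : seq X,
    path (fun a b => covers a b || covers b a) x s && (last x s == y).

End Incidence.

(* Let J_k be the functions vanishing on all pairs (p, q) with l(p, q) < k;
   J_a J_b is contained in J_(a+b). Since e_xy = [e_xx, e_xy] and, splitting a
   longest chain below its top, e_xy = [e_xz, e_zy] with l(x, z) >= l(x, y) - 1,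
   every Lie endomorphism sends e_xy into J_l(x,y) and hence preserves each J_k.
   The inverse of a Lie automorphism phi is again one, so phi(e_xy) cannot lie
   in J_(l(x,y)+1): it has a nonzero entry at some (p, q) with l(p, q) = l(x, y).
   Bracketing with the diagonal idempotents e_aa shows that
   a |-> phi(e_aa)(p, p) - phi(e_aa)(q, q) equals [x = a] - [y = a] for any such
   entry; as the diagonals of the phi(e_aa) span all diagonal functions, this
   determines (p, q) = theta(x, y) and makes theta injective. Surjectivity
   follows from finiteness of B. *)

From HB Require Import structures.
From mathcomp Require Import all_boot all_order all_algebra zify.
From Stdlib Require Import FunctionalExtensionality ClassicalEpsilon.
Set Implicit Arguments. Unset Strict Implicit. Unset Printing Implicit Defensive.
Import Order.TTheory GRing.Theory.
Local Open Scope order_scope.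

Section Incidence.
Variables (d : Order.disp_t) (X : finPOrderType d) (K : fieldType).

Definition itv (x y : X) : {set X} := [set z | x <= z <= y].

Lemma is_chain_subset (C D : {set X}) : C \subset D -> is_chain D -> is_chain C.
Proof.
move=> /subsetP CD /forall_inP chD; apply/forall_inP => a aC.
by apply/forall_inP => b bC; move/forall_inP: (chD a (CD a aC)); apply; apply: CD.
Qed.

Lemma chain_max (C : {set X}) : is_chain C -> C != set0 ->
  exists2 z, z \in C & forall w, w \in C -> w <= z.
Proof.
move=> /forall_inP chC /set0Pn[z0 z0C].
pose below z := #|[set w in C | w <= z]|.
have [z zC zmax] := arg_maxnP below z0C.
exists z => // w wC; have /forall_inP/(_ z zC)/orP[//|zw] := chC w wC.
apply: contraT => wz; suff: (below z < below w)%N.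
  by move=> /leq_trans/(_ (zmax w wC)); rewrite ltnn.
apply: proper_card; apply/properP; split.
  by apply/subsetP => a; rewrite !inE => /andP[-> az]; apply: le_trans zw.
by exists w; rewrite !inE ?wC ?lexx // (negbTE wz).
Qed.

Lemma chain_le_ilen (x y : X) (C : {set X}) :
  C \subset itv x y -> is_chain C -> (#|C|.-1 <= ilen x y)%N.
Proof. by move=> Cxy chC; apply: (leq_bigmax_cond C); rewrite Cxy chC. Qed.

Lemma ilen_chain (x y : X) :
  exists C : {set X}, [/\ C \subset itv x y, is_chain C & ilen x y = #|C|.-1].
Proof.
have chain0 : (set0 \subset itv x y) && is_chain (set0 : {set X}).
  by rewrite sub0set; apply/forall_inP => a; rewrite in_set0.
rewrite /ilen (bigop.bigmax_eq_arg set0 chain0).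
by case: arg_maxnP => // C /andP[Cxy chC] _; exists C.
Qed.

Lemma ilen_gt0 (x y : X) : (0 < ilen x y)%N = (x < y).
Proof.
apply/idP/idP => [|xy].
  have [C [/subsetP Cxy _ ->]] := ilen_chain x y.
  rewrite -subn1 subn_gt0 => /card_gt1P[a [b [aC bC ab]]].
  move: (Cxy a aC) (Cxy b bC); rewrite !inE => /andP[xa ay] /andP[xb yb].
  rewrite lt_def (le_trans xa ay) andbT; apply: contraNneq ab => yx.
  have -> : a = x by apply/le_anti; rewrite xa -yx ay.
  by have -> : b = x by apply/le_anti; rewrite xb -yx yb.
have := @chain_le_ilen x y [set x; y]; rewrite cards2 (lt_eqF xy) /=; apply.
  by apply/subsetP => z; rewrite !inE => /orP[]/eqP->; rewrite lexx ltW.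
apply/forall_inP => a /set2P[]->; apply/forall_inP => b /set2P[]->;
  by rewrite ?lexx ?(ltW xy) ?orbT.
Qed.

Lemma ilen_id (x : X) : ilen x x = 0%N.
Proof. by apply/eqP; rewrite -leqn0 leqNgt ilen_gt0 ltxx. Qed.

Lemma ilen_superadditive (x z y : X) : x <= z -> z <= y ->
  (ilen x z + ilen z y <= ilen x y)%N.
Proof.
move=> xz zy; have [C1 [/subsetP C1xz ch1 ->]] := ilen_chain x z.
have [C2 [/subsetP C2zy ch2 ->]] := ilen_chain z y.
have le_z a : a \in C1 -> a <= z by move/C1xz; rewrite inE => /andP[].
have ge_z b : b \in C2 -> z <= b by move/C2zy; rewrite inE => /andP[].
have ch12 : is_chain (C1 :|: C2).
  apply/forall_inP => a; rewrite inE => /orP[aC|aC];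
  apply/forall_inP => b; rewrite inE => /orP[bC|bC].
  - by move/forall_inP: ch1 => /(_ a aC)/forall_inP/(_ b bC).
  - by rewrite (le_trans (le_z a aC) (ge_z b bC)).
  - by rewrite (le_trans (le_z b bC) (ge_z a aC)) orbT.
  - by move/forall_inP: ch2 => /(_ a aC)/forall_inP/(_ b bC).
have sub12 : C1 :|: C2 \subset itv x y.
  apply/subsetP => a; rewrite !inE => /orP[/C1xz|/C2zy]; rewrite inE => /andP[xa ay].
    by rewrite xa (le_trans ay zy).
  by rewrite ay (le_trans xz xa).
have meet12 : (#|C1 :&: C2| <= 1)%N.
  rewrite -(cards1 z); apply/subset_leq_card/subsetP => a; rewrite !inE => /andP[a1 a2].
  by rewrite eq_le le_z ?ge_z.
have := chain_le_ilen sub12 ch12; have := cardsUI C1 C2.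
have := subset_leq_card (subsetUl C1 C2); have := subset_leq_card (subsetUr C1 C2).
lia.
Qed.

Lemma ilen_below_top (x y : X) (k : nat) : (k < ilen x y)%N ->
  exists z, [/\ x <= z, z < y & (k <= ilen x z)%N].
Proof.
have [C [/subsetP Cxy chC ->]] := ilen_chain x y => kC.
have C'_card : (k < #|C :\ y|)%N.
  by move: kC; rewrite (cardsD1 y C); case: (y \in C); rewrite /= ?add1n ?add0n; lia.
have chC' := is_chain_subset (subsetDl C [set y]) chC.
have [|z zC' zmax] := chain_max chC'; first by rewrite -card_gt0; lia.
move: (zC'); rewrite !inE => /andP[zy /Cxy]; rewrite inE => /andP[xz zley].
exists z; split => //; first by rewrite lt_neqAle zy.
have /chain_le_ilen/(_ chC') : C :\ y \subset itv x z.
  apply/subsetP => w wC'; rewrite inE zmax // andbT.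
  by move: wC'; rewrite !inE => /andP[_ /Cxy]; rewrite inE => /andP[].
lia.
Qed.

Local Open Scope ring_scope.
Implicit Types f g : X -> X -> K.

Lemma funext2 f g : (forall a b, f a b = g a b) -> f = g.
Proof. by move=> fg; do 2!apply: functional_extensionality => ?; apply: fg. Qed.

Lemma inI_e (x y : X) : (x <= y)%O -> inI (e K x y).
Proof. by move=> xy u v; rewrite /e; case: eqP => [->|] //=; case: eqP => [->|]; rewrite ?xy. Qed.

Lemma inI_lin (c : K) f g : inI f -> inI g -> inI (fun a b => c * f a b + g a b).
Proof. by move=> If Ig u v uv; rewrite If // Ig // mulr0 addr0. Qed.

Lemma inI_sum (I : Type) (r : seq I) (P : pred I) (c : I -> K) (F : I -> X -> X -> K) :
  (forall i, P i -> inI (F i)) -> inI (fun a b => \sum_(i <- r | P i) c i * F i a b).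
Proof. by move=> IF u v uv; rewrite big1 // => i Pi; rewrite IF // mulr0. Qed.

Lemma inI_imul f g : inI (imul f g).
Proof.
move=> u v uv; rewrite /imul big1 // => t /andP[ut tv].
by move: uv; rewrite (le_trans ut tv).
Qed.

Lemma inI_ibracket f g : inI (ibracket f g).
Proof. by move=> u v uv; rewrite /ibracket !inI_imul // subrr. Qed.

Lemma imul_diag f g p : imul f g p p = f p p * g p p.
Proof.
rewrite /imul (bigD1 p) ?lexx //= big1 ?addr0 // => t /andP[/andP[pt tp] tp'].
by move: tp'; rewrite eq_le pt tp.
Qed.

Lemma ibracket_diag f g p : ibracket f g p p = 0.
Proof. by rewrite /ibracket !imul_diag mulrC subrr. Qed.

Lemma incidence_expand f : inI f ->
  f = fun a b => \sum_(pq : X * X | (pq.1 <= pq.2)%O) f pq.1 pq.2 * e K pq.1 pq.2 a b.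
Proof.
move=> If; apply: funext2 => a b; rewrite /e.
case: (boolP (a <= b)%O) => ab.
  rewrite (bigD1 (a, b)) //= !eqxx mulr1 big1 ?addr0 // => -[p q] /andP[_ neq] /=.
  case: andP => [[/eqP ap /eqP bq]|_]; rewrite ?mulr0 //.
  by move: neq; rewrite ap bq eqxx.
rewrite If // big1 // => -[p q] /= pq.
by case: andP => [[/eqP ap /eqP bq]|_]; rewrite ?mulr0 //; move: ab; rewrite ap bq pq.
Qed.

Lemma eE (x y u v : X) : e K x y u v = ((u == x) && (v == y))%:R.
Proof. by rewrite /e; case: ifP. Qed.

Lemma imul_e (a b c w u v : X) : imul (e K a b) (e K c w) u v =
  ([&& u == a, v == w, b == c, (a <= b)%O & (b <= w)%O])%:R.
Proof.
rewrite /imul; case: (boolP (u <= b <= v)%O) => ubv.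
  rewrite (bigD1 b ubv) /= big1 ?addr0 => [|t /andP[_ /negbTE tb]]; last first.
    by rewrite !eE tb andbF mul0r.
  rewrite !eE -natrM mulnb eqxx andbT; move: ubv.
  case: (u =P a) => [<-|] //=; case: (v =P w) => [<-|]; rewrite ?andbF //.
  by move=> ->; rewrite andbT.
rewrite big1 => [|t tuv]; last first.
  by rewrite !eE -natrM mulnb; case: (t =P b) tuv => [->|]; rewrite ?(negbTE ubv) ?andbF.
move: ubv; case: (u =P a) => [<-|] //=; case: (v =P w) => [<-|]; rewrite ?andbF //.
by move=> /negbTE->; rewrite andbF.
Qed.

Lemma ibracket_e_chain (x z y : X) : (x <= z)%O -> (z <= y)%O -> x != y ->
  ibracket (e K x z) (e K z y) = e K x y.
Proof.
move=> xz zy /negbTE xy; apply: funext2 => u v.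
by rewrite /ibracket !imul_e eE eqxx xz zy [y == x]eq_sym xy !andbF !andbT subr0.
Qed.

Lemma ibracket_diag_e (x u v : X) : (u <= v)%O ->
  ibracket (e K x x) (e K u v) = fun a b => ((u == x)%:R - (v == x)%:R) * e K u v a b.
Proof.
move=> uv; apply: funext2 => a b; rewrite /ibracket !imul_e eE lexx.
case: (eqVneq x u) => [xu|/negbTE xu]; case: (eqVneq x v) => [xv|xv]; subst;
  rewrite ?eqxx ?lexx ?uv ?xu ?(eq_sym v) ?(negbTE xv) ?andbF ?andbT ?mulr0n ?mulr1n /=.
- by rewrite !subrr mul0r.
- by rewrite !subr0 mul1r.
- by rewrite !sub0r mulN1r.
- by rewrite !subrr mul0r.
Qed.

Definition vanishes_below (k : nat) f := forall p q, (ilen p q < k)%N -> f p q = 0.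

Lemma vanishes_below1 f : inI f -> (forall p, f p p = 0) -> vanishes_below 1 f.
Proof.
move=> If f_diag p q; rewrite ltnS leqn0 -[_ == _]negbK -lt0n ilen_gt0 lt_neqAle negb_and negbK.
by case/orP=> [/eqP->|/If].
Qed.

Lemma imul_vanishes_below (a b : nat) f g :
  vanishes_below a f -> vanishes_below b g -> vanishes_below (a + b) (imul f g).
Proof.
move=> fa gb p q pq; rewrite /imul big1 // => t /andP[pt tq].
have := ilen_superadditive pt tq.
case: (ltnP (ilen p t) a) => [/fa->|pta]; first by rewrite mul0r.
case: (ltnP (ilen t q) b) => [/gb->|tqb]; first by rewrite mulr0.
lia.
Qed.

Lemma ibracket_vanishes_below (a b : nat) f g :
  vanishes_below a f -> vanishes_below b g -> vanishes_below (a + b) (ibracket f g).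
Proof.
move=> fa gb p q pq; rewrite /ibracket (imul_vanishes_below fa gb) //.
by rewrite (imul_vanishes_below gb fa) ?subrr // addnC.
Qed.

Lemma imul_top_r f g (p q : X) : (p <= q)%O -> vanishes_below (ilen p q) g ->
  imul f g p q = f p p * g p q.
Proof.
move=> pq gpq; rewrite /imul (bigD1 p) ?lexx ?pq //= big1 ?addr0 // => t /andP[/andP[pt tq] tp].
have pt0 : (0 < ilen p t)%N by rewrite ilen_gt0 lt_neqAle eq_sym tp.
by rewrite gpq ?mulr0 //; have := ilen_superadditive pt tq; lia.
Qed.

Lemma imul_top_l f g (p q : X) : (p <= q)%O -> vanishes_below (ilen p q) f ->
  imul f g p q = f p q * g q q.
Proof.
move=> pq fpq; rewrite /imul (bigD1 q) ?lexx ?pq //= big1 ?addr0 // => t /andP[/andP[pt tq] tq'].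
have tq0 : (0 < ilen t q)%N by rewrite ilen_gt0 lt_neqAle tq' tq.
by rewrite fpq ?mul0r //; have := ilen_superadditive pt tq; lia.
Qed.

Lemma ibracket_top f g (p q : X) : (p <= q)%O -> vanishes_below (ilen p q) g ->
  ibracket f g p q = (f p p - f q q) * g p q.
Proof.
by move=> pq gpq; rewrite /ibracket imul_top_r // imul_top_l // mulrBl [g p q * _]mulrC.
Qed.

Definition lie_endomorphism (phi : (X -> X -> K) -> X -> X -> K) : Prop :=
  [/\ forall f, inI f -> inI (phi f),
      forall (c : K) f g, inI f -> inI g -> forall u v,
        phi (fun a b => c * f a b + g a b) u v = c * phi f u v + phi g u v
    & forall f g, inI f -> inI g -> forall u v,
        phi (ibracket f g) u v = ibracket (phi f) (phi g) u v].

Lemma lie_automorphism_endo phi : lie_automorphism phi -> lie_endomorphism phi.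
Proof. by case. Qed.

Section LieEndomorphism.
Variable phi : (X -> X -> K) -> X -> X -> K.
Hypothesis phi_endo : lie_endomorphism phi.

Lemma endo_inI f : inI f -> inI (phi f).
Proof. by case: phi_endo => + _ _; apply. Qed.

Lemma endo_lin (c : K) f g : inI f -> inI g -> forall u v,
  phi (fun a b => c * f a b + g a b) u v = c * phi f u v + phi g u v.
Proof. by case: phi_endo => _ + _; apply. Qed.

Lemma endo_ibracket f g : inI f -> inI g -> phi (ibracket f g) = ibracket (phi f) (phi g).
Proof. by case: phi_endo => _ _ br If Ig; apply: funext2; apply: br. Qed.

Lemma endo0 (u v : X) : phi (fun _ _ => 0) u v = 0.
Proof.
have I0 : inI (fun _ _ : X => 0 : K) by [].
by have := endo_lin (-1) I0 I0 u v; rewrite !mulN1r !addNr.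
Qed.

Lemma endoZ (c : K) f : inI f -> forall u v, phi (fun a b => c * f a b) u v = c * phi f u v.
Proof.
move=> If u v; rewrite -[RHS]addr0 -[X in _ + X](endo0 u v) -endo_lin //.
by congr (phi _ u v); apply: funext2 => a b; rewrite addr0.
Qed.

Lemma endo_sum (I : Type) (r : seq I) (P : pred I) (c : I -> K) (F : I -> X -> X -> K) :
  (forall i, P i -> inI (F i)) -> forall u v,
  phi (fun a b => \sum_(i <- r | P i) c i * F i a b) u v = \sum_(i <- r | P i) c i * phi (F i) u v.
Proof.
move=> IF u v; elim: r => [|i r IH].
  rewrite big_nil -[RHS](endo0 u v); congr (phi _ u v).
  by apply: funext2 => a b; rewrite big_nil.
rewrite big_cons; case: ifP => Pi; rewrite -IH; last first.
  by congr (phi _ u v); apply: funext2 => a b; rewrite big_cons Pi.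
rewrite -(endo_lin _ (IF i Pi) (inI_sum r c IF)).
by congr (phi _ u v); apply: funext2 => a b; rewrite big_cons Pi.
Qed.

Lemma endo_e_vanishes_below1 (x y : X) : (x < y)%O -> vanishes_below 1 (phi (e K x y)).
Proof.
move=> xy; rewrite -(ibracket_e_chain (lexx x) (ltW xy) (negbT (lt_eqF xy))).
rewrite (endo_ibracket (inI_e (lexx x)) (inI_e (ltW xy))).
exact: vanishes_below1 (inI_ibracket _ _) (ibracket_diag _ _).
Qed.

Lemma endo_e_vanishes_below (k : nat) (x y : X) :
  (k <= ilen x y)%N -> vanishes_below k (phi (e K x y)).
Proof.
elim: k x y => [|k IH] x y kxy; first by [].
have [z [xz zy kxz]] := ilen_below_top kxy.
have xy := le_lt_trans xz zy.
rewrite -(ibracket_e_chain xz (ltW zy) (negbT (lt_eqF xy))).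
rewrite (endo_ibracket (inI_e xz) (inI_e (ltW zy))) -addn1.
exact: ibracket_vanishes_below (IH _ _ kxz) (endo_e_vanishes_below1 zy).
Qed.

Lemma endo_vanishes_below (k : nat) f :
  inI f -> vanishes_below k f -> vanishes_below k (phi f).
Proof.
move=> If fk p q pqk; rewrite (incidence_expand If) endo_sum => [|pq]; last exact: inI_e.
rewrite big1 // => pq _; case: (ltnP (ilen pq.1 pq.2) k) => [/fk->|kpq]; first by rewrite mul0r.
by rewrite (endo_e_vanishes_below kpq) ?mulr0.
Qed.

Lemma endo_diag f (b : X) : inI f -> phi f b b = \sum_x f x x * phi (e K x x) b b.
Proof.
move=> If; rewrite {1}(incidence_expand If) endo_sum => [|pq]; last exact: inI_e.
rewrite -(pair_big_dep xpredT (fun x y => (x <= y)%O) (fun x y => f x y * phi (e K x y) b b)) /=.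
apply: eq_bigr => x _; rewrite (bigD1 x) //= big1 ?addr0 // => y /andP[xy yx].
by rewrite endo_e_vanishes_below1 ?mulr0 ?ilen_id // lt_neqAle eq_sym yx.
Qed.

End LieEndomorphism.

(* The order matters: in characteristic 2 the pairs (p, q) and (q, p) have the
   same indicator difference. *)
Lemma indicator_diff_inj (p q p' q' : X) : (p < q)%O -> (p' < q')%O ->
  (forall a, (p == a)%:R - (q == a)%:R = (p' == a)%:R - (q' == a)%:R :> K) ->
  (p, q) = (p', q').
Proof.
move=> pq pq' E; have /negbTE one_neq0 := oner_neq0 K.
have [pp'|pp'] := eqVneq p p'.
  subst p'; have := E q; rewrite (lt_eqF pq) eqxx mulr0n mulr1n !sub0r => /oppr_inj.
  by case: (eqVneq q' q) => [->|_] //; rewrite mulr0n => /eqP; rewrite one_neq0.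
have := E p; rewrite eqxx [p' == p]eq_sym (negbTE pp') [q == p]eq_sym (lt_eqF pq).
rewrite mulr1n !mulr0n subr0 sub0r.
case: (eqVneq q' p) => [q'p _|_]; last by rewrite mulr0n oppr0 => /eqP; rewrite one_neq0.
have := E p'; rewrite eqxx (negbTE pp') [q' == p']eq_sym (lt_eqF pq') mulr1n !mulr0n subr0 sub0r.
case: (eqVneq q p') => [qp'|_]; last by rewrite mulr0n oppr0 => /esym/eqP; rewrite one_neq0.
by move: pq'; rewrite -qp' q'p => /(lt_trans pq); rewrite ltxx.
Qed.

Definition lie_inv (phi : (X -> X -> K) -> X -> X -> K) g : X -> X -> K :=
  epsilon (inhabits (fun _ _ => 0)) (fun f => inI f /\ forall u v, phi f u v = g u v).

Section LieAutomorphism.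
Variable phi : (X -> X -> K) -> X -> X -> K.
Hypothesis phi_auto : lie_automorphism phi.
Let phi_endo := lie_automorphism_endo phi_auto.
Local Notation psi := (lie_inv phi).

Lemma auto_inj f g : inI f -> inI g -> phi f = phi g -> f = g.
Proof. by case: phi_auto => _ _ inj _ _ If Ig fg; apply/funext2/inj; rewrite ?fg. Qed.

Lemma lie_invP g : inI g -> inI (psi g) /\ phi (psi g) = g.
Proof.
case: phi_auto => _ _ _ surj _ /surj[f If fg].
have [Ipsi psiK] := epsilon_spec (inhabits (fun _ _ => 0))
  (fun f => inI f /\ forall u v, phi f u v = g u v) (ex_intro _ f (conj If fg)).
by split; last apply: funext2.
Qed.

Lemma lie_invK f : inI f -> psi (phi f) = f.
Proof.
move=> If; have [Ipsi psiK] := lie_invP (endo_inI phi_endo If).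
exact: auto_inj.
Qed.

Lemma lie_inv_endo : lie_endomorphism psi.
Proof.
split=> [g /lie_invP[] //|c f g If Ig|f g If Ig].
- have [Ipf pfK] := lie_invP If; have [Ipg pgK] := lie_invP Ig.
  have [Ipl plK] := lie_invP (inI_lin c If Ig).
  suff -> : psi (fun a b => c * f a b + g a b) = fun a b => c * psi f a b + psi g a b by [].
  apply: auto_inj Ipl (inI_lin c Ipf Ipg) _; rewrite plK; apply: funext2 => a b /=.
  by rewrite (endo_lin phi_endo) // pfK pgK.
- have [Ipf pfK] := lie_invP If; have [Ipg pgK] := lie_invP Ig.
  have [Ipb pbK] := lie_invP (inI_ibracket f g).
  suff -> : psi (ibracket f g) = ibracket (psi f) (psi g) by [].
  apply: auto_inj Ipb (inI_ibracket _ _) _.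
  by rewrite pbK (endo_ibracket phi_endo) // pfK pgK.
Qed.

Definition weight (p q x : X) : K := phi (e K x x) p p - phi (e K x x) q q.

Lemma diag_indicator (a : X) :
  exists c : X -> K, forall b, \sum_x c x * phi (e K x x) b b = (b == a)%:R.
Proof.
have [Ipsi psiK] := lie_invP (inI_e (lexx a)).
exists (fun x => psi (e K a a) x x) => b.
by rewrite -(endo_diag phi_endo _ Ipsi) psiK eE andbb.
Qed.

Lemma weight_inj (p q p' q' : X) : (p < q)%O -> (p' < q')%O ->
  weight p q =1 weight p' q' -> (p, q) = (p', q').
Proof.
move=> pq pq' w; apply: indicator_diff_inj => // a; have [c cE] := diag_indicator a.
by rewrite -!cE -!sumrB; apply: eq_bigr => x _; rewrite -!mulrBr -/(weight _ _ x) w.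
Qed.

Lemma weight_of_entry (u v p q : X) : (u < v)%O -> ilen p q = ilen u v ->
  phi (e K u v) p q != 0 -> forall x, weight p q x = (u == x)%:R - (v == x)%:R.
Proof.
move=> uv puv nz x; apply: (mulIf nz).
have pq : (p <= q)%O by rewrite ltW // -ilen_gt0 puv ilen_gt0.
have top : vanishes_below (ilen p q) (phi (e K u v)) by rewrite puv; exact: endo_e_vanishes_below.
rewrite /weight -(ibracket_top (phi (e K x x)) pq top).
rewrite -(endo_ibracket phi_endo (inI_e (lexx x)) (inI_e (ltW uv))) ibracket_diag_e ?ltW //.
by rewrite (endoZ phi_endo _ (inI_e (ltW uv))).
Qed.

Lemma phi_e_top_entry (u v : X) : (u < v)%O ->
  [exists pq : X * X, (ilen pq.1 pq.2 == ilen u v) && (phi (e K u v) pq.1 pq.2 != 0)].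
Proof.
move=> uv; apply: contraT; rewrite negb_exists => /forallP top.
have van : vanishes_below (ilen u v).+1 (phi (e K u v)).
  move=> p q; rewrite ltnS leq_eqVlt => /orP[puv|]; last exact: endo_e_vanishes_below.
  by apply/eqP; move: (top (p, q)); rewrite puv negb_and negbK.
have Iuv := inI_e (ltW uv).
have := endo_vanishes_below lie_inv_endo (endo_inI phi_endo Iuv) van (ltnSn (ilen u v)).
by rewrite lie_invK // eE !eqxx => /eqP; rewrite oner_eq0.
Qed.

(* The default [pq] is never used on B, by [phi_e_top_entry]. *)
Definition theta (pq : X * X) : X * X :=
  odflt pq [pick r : X * X |
    (ilen r.1 r.2 == ilen pq.1 pq.2) && (phi (e K pq.1 pq.2) r.1 r.2 != 0)].

Definition sigma (x y : X) : K := phi (e K x y) (theta (x, y)).1 (theta (x, y)).2.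

Lemma theta_spec (u v : X) : (u < v)%O ->
  ilen (theta (u, v)).1 (theta (u, v)).2 = ilen u v /\ sigma u v != 0.
Proof.
move=> uv; rewrite /sigma /theta /=; case: pickP => [r /andP[/eqP-> ->] //|none].
by have /existsP[r] := phi_e_top_entry uv; rewrite none.
Qed.

Lemma theta_lt (u v : X) : (u < v)%O -> ((theta (u, v)).1 < (theta (u, v)).2)%O.
Proof. by move=> uv; rewrite -ilen_gt0 (theta_spec uv).1 ilen_gt0. Qed.

Lemma theta_unique (u v p q : X) : (u < v)%O -> ilen p q = ilen u v ->
  phi (e K u v) p q != 0 -> (p, q) = theta (u, v).
Proof.
move=> uv puv nz; have [tuv tnz] := theta_spec uv.
have pq : (p < q)%O by rewrite -ilen_gt0 puv ilen_gt0.
rewrite [RHS]surjective_pairing; apply: weight_inj pq (theta_lt uv) _ => x.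
by rewrite (weight_of_entry uv puv nz) (weight_of_entry uv tuv tnz).
Qed.

Lemma theta_inj (u v u' v' : X) : (u < v)%O -> (u' < v')%O ->
  theta (u, v) = theta (u', v') -> (u, v) = (u', v').
Proof.
move=> uv uv' tE; have [t t0] := theta_spec uv; have [t' t0'] := theta_spec uv'.
apply: indicator_diff_inj => // a.
by rewrite -(weight_of_entry uv t t0 a) -(weight_of_entry uv' t' t0' a) tE.
Qed.

Lemma theta_surj (q : X * X) : (q.1 < q.2)%O ->
  exists2 p : X * X, (p.1 < p.2)%O & theta p = q.
Proof.
move=> q12; pose B := [set r : X * X | (r.1 < r.2)%O]; have qB : q \in B by rewrite inE.
have thetaB : theta @: B \subset B.
  by apply/subsetP => r /imsetP[[u v]]; rewrite !inE => uv ->; apply: theta_lt.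
have /subset_cardP/(_ thetaB) imB : #|theta @: B| = #|B|.
  by apply: card_in_imset => -[u v] [u' v']; rewrite !inE; apply: theta_inj.
by move: qB; rewrite -imB => /imsetP[p]; rewrite inE => pB ->; exists p.
Qed.

Lemma phi_tilde_e (x y : X) : (x < y)%O -> forall u v,
  phi_tilde phi x y u v = sigma x y * e K (theta (x, y)).1 (theta (x, y)).2 u v.
Proof.
move=> xy u v; have [txy _] := theta_spec xy.
rewrite /phi_tilde /Lcomp eE; case: andP => [[/eqP-> /eqP->]|ne].
  by rewrite txy eqxx mulr1.
rewrite mulr0; case: eqP => // uvxy; apply/eqP; apply: contraT => nz.
by case: ne; rewrite -(theta_unique xy uvxy nz) !eqxx.
Qed.

End LieAutomorphism.

End Incidence.

Unset Implicit Arguments.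

Theorem lemma4p3 (d : Order.disp_t) (X : finPOrderType d) (K : fieldType)
  (phi : (X -> X -> K) -> (X -> X -> K)) :
  connected_poset X ->
  lie_automorphism phi ->
  exists (theta : X * X -> X * X) (sigma : X -> X -> K),
    [/\ (* theta maps B into B *)
        (forall p : X * X, p.1 < p.2 -> (theta p).1 < (theta p).2),
        (* theta is injective on B *)
        (forall p q : X * X, p.1 < p.2 -> q.1 < q.2 -> theta p = theta q -> p = q),
        (* theta is surjective onto B *)
        (forall q : X * X, q.1 < q.2 -> exists2 p : X * X, p.1 < p.2 & theta p = q),
        (* theta(B_i) subset B_i for all i >= 1 *)
        (forall (i : nat) (p : X * X), (1 <= i)%N -> p.1 < p.2 ->
            (i <= ilen p.1 p.2)%N -> (i <= ilen (theta p).1 (theta p).2)%N)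
      & (* sigma takes values in K^* *)
        ((forall x y : X, x < y -> sigma x y != 0%R) /\
        (* tilde phi (e_xy) = sigma(x,y) theta(e_xy) *)
        (forall x y : X, x < y -> forall u v : X,
            phi_tilde phi x y u v = (sigma x y * e K (theta (x, y)).1 (theta (x, y)).2 u v)%R))].
Proof.
move=> _ phi_auto; exists (theta phi), (sigma phi); split.
- by case=> u v; apply: theta_lt.
- by case=> u v [u' v']; apply: theta_inj.
- exact: theta_surj.
- by move=> i [u v] _ /= uv; rewrite (theta_spec phi_auto uv).1.
- by split=> [x y /(theta_spec phi_auto)[]|]; last exact: phi_tilde_e.
Qed.
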